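(* Under the standing assumptions, suppose $a>1/4$ and $m\ge 6$, and let $\theta_a=\cos^{-1}\!\left(-\frac{1}{2\sqrt a}\right)$. For an integer $h$ with $\lfloor (m+1)/2\rfloor+1\le h\le m+1$ let $$J_h=\begin{cases}\left(\frac{h-1}{m+1}\pi,\frac{h}{m+1}\pi\right) & \text{if } \lfloor (m+1)/2\rfloor+2\le h\le m+1,\\[2pt] \left(\frac{\pi}{2},\frac{h}{m+1}\pi\right) & \text{if } h=\lfloor (m+1)/2\rfloor+1.\end{cases}$$ If $\theta_a\in J_h$, then $g_m$ has at least two zeros in $J_h\setminus\{\theta_a\}$ when $\lfloor (m+1)/2\rfloor+2\le h\le m$, and at least one zero in $J_h\setminus\{\theta_a\}$ when $h=m+1$ or $h=\lfloor(m+1)/2\rfloor+1$.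
   Context: Standing assumptions: $a,b\in\mathbb{R}$ with $b>0$, $1+a+b>0$, $9-27a+b>0$, $2-8a+8a^2+ab\ne0$, $b+1-a\ne0$. Let $f^*(\zeta,\theta)=(\zeta+2\cos\theta)(2\zeta\cos\theta+1)+b\zeta-a(\zeta+2\cos\theta)^3$. Under these assumptions, for each $\theta\in(\pi/2,\pi)$ the polynomial $f^*(\cdot,\theta)$ has exactly one real zero in $(-1,1)$; denote it $w(\theta)$ and set $\zeta(\theta)=1/w(\theta)$ (finite except at $\theta_a$). For $\theta\in(\pi/2,\pi)$ with $w(\theta)\ne0$ define $$g_m(\theta)=\frac{(\zeta(\theta)-\cos\theta)\sin((m+1)\theta)}{\sin\theta}-\cos((m+1)\theta)+\frac{1}{\zeta(\theta)^{m+1}}.$$ *)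

From Stdlib Require Import Reals Lra Lia.
Open Scope R_scope.

Definition standing (a b : R) : Prop :=
  b > 0 /\ 1 + a + b > 0 /\ 9 - 27 * a + b > 0 /\
  2 - 8 * a + 8 * a ^ 2 + a * b <> 0 /\ b + 1 - a <> 0.

Definition fstar (a b zeta theta : R) : R :=
  (zeta + 2 * cos theta) * (2 * zeta * cos theta + 1) + b * zeta
  - a * (zeta + 2 * cos theta) ^ 3.

Definition is_w (a b : R) (w : R -> R) : Prop :=
  forall theta, PI / 2 < theta < PI ->
    -1 < w theta < 1 /\ fstar a b (w theta) theta = 0.

(* g_m(theta), with zeta = 1/w, so 1/zeta^(m+1) = w^(m+1). *)
Definition g (w : R -> R) (m : nat) (theta : R) : R :=
  (/ w theta - cos theta) * sin (INR (m + 1) * theta) / sin theta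
  - cos (INR (m + 1) * theta) + (w theta) ^ (m + 1).

Definition theta_a (a : R) : R := acos (- (1 / (2 * sqrt a))).

Definition fl (m : nat) : nat := Nat.div (m + 1) 2.

Definition Jlo (m h : nat) : R :=
  if Nat.eqb h (fl m + 1) then PI / 2
  else INR (h - 1) / INR (m + 1) * PI.
Definition Jhi (m h : nat) : R := INR h / INR (m + 1) * PI.

Definition inJ (m h : nat) (theta : R) : Prop := Jlo m h < theta < Jhi m h.

(* theta is a zero of g_m in J_h \ {theta_a} (g_m defined: w theta <> 0) *)
Definition zero_in (a : R) (w : R -> R) (m h : nat) (theta : R) : Prop :=
  inJ m h theta /\ theta <> theta_a a /\ w theta <> 0 /\ g w m theta = 0.

From Stdlib Require Import Reals Ranalysis5 Lra Lia Psatz.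
Open Scope R_scope.

(* For theta in (pi/2, pi) the cubic f*(., theta) is negative at -1 and
   positive at 1, so its unique root w(theta) in (-1, 1) depends continuously
   on theta; it vanishes exactly at theta_a, where it changes sign from + to -.
   The product psi = w g_m is continuous across theta_a with
   psi(theta_a) = sin((m+1) theta_a) / sin theta_a, of sign (-1)^k when
   k pi < (m+1) theta_a < (k+1) pi.  At a node j pi/(m+1), g_m = -(-1)^j + w^(m+1)
   has the sign of -(-1)^j because |w| < 1.  Hence g_m = psi / w changes sign
   between theta_a and each neighbouring node, and the intermediate value theorem
   gives a zero on each side.  For h = m + 1 the right neighbouring node is pi,
   and for h = fl m + 1 the left one is at most pi/2; both lie outside the
   domain of w, so only one zero is found there. *)

Definition near (x0 : R) (P : R -> Prop) : Prop :=
  exists d, 0 < d /\ forall x, Rabs (x - x0) < d -> P x.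

Lemma near_mono x0 (P Q : R -> Prop) :
  near x0 P -> (forall x, P x -> Q x) -> near x0 Q.
Proof. intros [d [Hd HP]] HPQ. exists d; split; auto. Qed.

Lemma near_and x0 (P Q : R -> Prop) :
  near x0 P -> near x0 Q -> near x0 (fun x => P x /\ Q x).
Proof.
  intros [d1 [Hd1 H1]] [d2 [Hd2 H2]].
  exists (Rmin d1 d2); split; [now apply Rmin_pos|].
  intros x Hx; pose proof (Rmin_l d1 d2); pose proof (Rmin_r d1 d2).
  split; [apply H1 | apply H2]; lra.
Qed.

Lemma near_open_interval lo hi x0 : lo < x0 < hi -> near x0 (fun x => lo < x < hi).
Proof.
  intros Hx0. exists (Rmin (x0 - lo) (hi - x0)); split; [apply Rmin_pos; lra|].
  intros x Hx; apply Rabs_def2 in Hx.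
  pose proof (Rmin_l (x0 - lo) (hi - x0)); pose proof (Rmin_r (x0 - lo) (hi - x0)).
  lra.
Qed.

Lemma near_left_point x0 (P : R -> Prop) lo :
  near x0 P -> lo < x0 -> exists t, lo < t < x0 /\ P t.
Proof.
  intros [d [Hd HP]] Hlo. pose proof (Rmin_l d (x0 - lo)); pose proof (Rmin_r d (x0 - lo)).
  assert (0 < Rmin d (x0 - lo)) by (apply Rmin_pos; lra).
  exists (x0 - Rmin d (x0 - lo) / 2); split; [lra|].
  apply HP; rewrite Rabs_left; lra.
Qed.

Lemma near_right_point x0 (P : R -> Prop) hi :
  near x0 P -> x0 < hi -> exists t, x0 < t < hi /\ P t.
Proof.
  intros [d [Hd HP]] Hhi. pose proof (Rmin_l d (hi - x0)); pose proof (Rmin_r d (hi - x0)).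
  assert (0 < Rmin d (hi - x0)) by (apply Rmin_pos; lra).
  exists (x0 + Rmin d (hi - x0) / 2); split; [lra|].
  apply HP; rewrite Rabs_right; lra.
Qed.

Lemma continuity_pt_of_near f x0 :
  (forall eps, 0 < eps -> near x0 (fun x => Rabs (f x - f x0) < eps)) ->
  continuity_pt f x0.
Proof.
  intros Hf eps Heps. destruct (Hf eps Heps) as [d [Hd H]].
  exists d; split; [lra|]. intros x [_ Hx]. exact (H x Hx).
Qed.

Lemma continuity_pt_pos_near f x0 :
  continuity_pt f x0 -> 0 < f x0 -> near x0 (fun x => 0 < f x).
Proof.
  intros Hc Hpos. destruct (Hc (f x0) Hpos) as [d [Hd H]].
  exists d; split; [lra|]. intros x Hx.
  destruct (Req_dec x x0) as [->|Hne]; [lra|].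
  assert (Hdist : Rabs (f x - f x0) < f x0)
    by (apply (H x); repeat split; auto).
  apply Rabs_def2 in Hdist; lra.
Qed.

Lemma continuity_pt_neg_near f x0 :
  continuity_pt f x0 -> f x0 < 0 -> near x0 (fun x => f x < 0).
Proof.
  intros Hc Hneg.
  apply (near_mono _ (fun x => 0 < - f x)); [|intros; lra].
  apply continuity_pt_pos_near; [now apply continuity_pt_opp | lra].
Qed.

Lemma IVT_open f x y :
  (forall z, x <= z <= y -> continuity_pt f z) -> x < y -> f x < 0 < f y ->
  exists z, x < z < y /\ f z = 0.
Proof.
  intros Hc Hxy [Hx Hy].
  destruct (IVT_interv f x y Hc Hxy Hx Hy) as [z [[[Hxz | <-] [Hzy | ->]] Hz]];
    [exists z; auto | lra ..].
Qed.

Section ImplicitRoot.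

Variables (F : R -> R -> R) (w : R -> R) (lo hi : R).
Hypothesis F_continuous_in_root : forall t, continuity (fun z => F z t).
Hypothesis F_continuous_in_param : forall z t, continuity_pt (F z) t.
Hypothesis F_neg_at_m1 : forall t, lo < t < hi -> F (-1) t < 0.
Hypothesis F_pos_at_1 : forall t, lo < t < hi -> 0 < F 1 t.
Hypothesis w_root : forall t, lo < t < hi -> -1 < w t < 1 /\ F (w t) t = 0.
Hypothesis w_unique : forall t z, lo < t < hi -> -1 < z < 1 -> F z t = 0 -> z = w t.

Lemma F_neg_below_root t z : lo < t < hi -> -1 < z < w t -> F z t < 0.
Proof.
  intros Ht Hz. destruct (w_root t Ht) as [Hw _].
  destruct (Rtotal_order (F z t) 0) as [|[Hz0|Hzpos]]; [assumption| |].
  - assert (z = w t) by (apply w_unique; auto; lra). lra.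
  - destruct (IVT_open (fun y => F y t) (-1) z) as [y [Hy Hy0]];
      [intros; apply F_continuous_in_root | lra | split; auto |].
    assert (y = w t) by (apply w_unique; auto; lra). lra.
Qed.

Lemma F_pos_above_root t z : lo < t < hi -> w t < z < 1 -> 0 < F z t.
Proof.
  intros Ht Hz. destruct (w_root t Ht) as [Hw _].
  destruct (Rtotal_order (F z t) 0) as [Hzneg|[Hz0|]]; [| |assumption].
  - destruct (IVT_open (fun y => F y t) z 1) as [y [Hy Hy0]];
      [intros; apply F_continuous_in_root | lra | split; auto |].
    assert (y = w t) by (apply w_unique; auto; lra). lra.
  - assert (z = w t) by (apply w_unique; auto; lra). lra.
Qed.

(* The root is trapped between w t0 - e and w t0 + e because F keeps its
   sign at these two points for t near t0. *)
Lemma root_continuous t0 : lo < t0 < hi -> continuity_pt w t0.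
Proof.
  intros Ht0. destruct (w_root t0 Ht0) as [Hw0 _].
  apply continuity_pt_of_near; intros eps Heps.
  set (e := Rmin eps (Rmin (1 - w t0) (w t0 + 1)) / 2).
  assert (He : 0 < e /\ e < eps /\ -1 < w t0 - e /\ w t0 + e < 1).
  { unfold e. pose proof (Rmin_l eps (Rmin (1 - w t0) (w t0 + 1))).
    pose proof (Rmin_r eps (Rmin (1 - w t0) (w t0 + 1))).
    pose proof (Rmin_l (1 - w t0) (w t0 + 1)). pose proof (Rmin_r (1 - w t0) (w t0 + 1)).
    assert (0 < Rmin eps (Rmin (1 - w t0) (w t0 + 1))) by (repeat apply Rmin_pos; lra).
    lra. }
  assert (Hbelow : F (w t0 - e) t0 < 0) by (apply F_neg_below_root; lra).
  assert (Habove : 0 < F (w t0 + e) t0) by (apply F_pos_above_root; lra).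
  apply (near_mono _ _ _ (near_and _ _ _ (near_open_interval lo hi t0 Ht0)
    (near_and _ _ _ (continuity_pt_neg_near _ _ (F_continuous_in_param _ _) Hbelow)
                    (continuity_pt_pos_near _ _ (F_continuous_in_param _ _) Habove)))).
  intros t [Ht [Hneg Hpos]].
  destruct (IVT_open (fun y => F y t) (w t0 - e) (w t0 + e)) as [y [Hy Hy0]];
    [intros; apply F_continuous_in_root | lra | split; auto |].
  assert (y = w t) by (apply w_unique; auto; lra).
  subst y; apply Rabs_def1; lra.
Qed.

End ImplicitRoot.

Section CubicAtFixedAngle.

Variables (a b t : R).
Hypotheses (Hab : standing a b) (Ha : 1 / 4 < a) (Hcos : -1 < cos t < 0).

Lemma fstar_pos_at_1 : 0 < fstar a b 1 t.
Proof.
  destruct Hab as [Hb [_ [H9 _]]].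
  replace (fstar a b 1 t) with ((1 + 2 * cos t) ^ 2 + b - a * (1 + 2 * cos t) ^ 3)
    by (unfold fstar; ring).
  set (u := 1 + 2 * cos t). assert (Hu : -1 < u < 1) by (unfold u; lra). clearbody u.
  destruct (Rle_lt_dec u 0).
  - assert (0 <= u ^ 2) by nra. assert (u ^ 3 <= 0) by nra. nra.
  - destruct (Rle_lt_dec a 1).
    + assert (0 <= u ^ 2 * (1 - a * u)) by (apply Rmult_le_pos; nra). nra.
    + assert (0 <= (1 - u) * (a * (1 + u + u ^ 2) - (1 + u)))
        by (apply Rmult_le_pos; nra).
      nra.
Qed.

Lemma fstar_neg_at_m1 : fstar a b (-1) t < 0.
Proof.
  destruct Hab as [Hb [_ [H9 _]]].
  replace (fstar a b (-1) t) with (a * (1 - 2 * cos t) ^ 3 - (1 - 2 * cos t) ^ 2 - b)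
    by (unfold fstar; ring).
  set (u := 1 - 2 * cos t). assert (Hu : 1 < u < 3) by (unfold u; lra). clearbody u.
  destruct (Rle_lt_dec (a * u) 1); [nra|].
  assert (u < a * u ^ 2) by nra.
  assert ((u - 3) * (a * (u ^ 2 + 3 * u + 9) - (u + 3)) < 0)
    by (apply Rmult_neg_pos; nra).
  nra.
Qed.

(* Two distinct roots z1, z2 would force f* = (z - z1)(z - z2)(k - a z);
   the signs at -1 and 1 then give a + k < 0 < k - a. *)
Lemma fstar_root_unique z1 z2 :
  -1 < z1 < 1 -> -1 < z2 < 1 -> fstar a b z1 t = 0 -> fstar a b z2 t = 0 -> z1 = z2.
Proof.
  intros Hz1 Hz2 E1 E2.
  destruct (Req_dec z1 z2) as [|Hne]; [assumption|exfalso].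
  set (k := 2 * cos t - 6 * a * cos t - a * (z1 + z2)).
  assert (Hfactor : forall z, fstar a b z t = (z - z1) * (z - z2) * (k - a * z)).
  { intro z. apply (Rmult_eq_reg_r (z2 - z1)); [|lra].
    transitivity ((z - z1) * (z - z2) * (k - a * z) * (z2 - z1)
                  + fstar a b z1 t * (z2 - z) + fstar a b z2 t * (z - z1));
      [unfold k, fstar; ring | rewrite E1, E2; ring]. }
  pose proof fstar_neg_at_m1 as Hm1; pose proof fstar_pos_at_1 as H1.
  rewrite Hfactor in Hm1, H1.
  replace ((-1 - z1) * (-1 - z2) * (k - a * -1)) with ((1 + z1) * (1 + z2) * (k + a))
    in Hm1 by ring.
  replace ((1 - z1) * (1 - z2) * (k - a * 1)) with ((1 - z1) * (1 - z2) * (k - a))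
    in H1 by ring.
  assert (0 < (1 + z1) * (1 + z2)) by nra.
  assert (0 < (1 - z1) * (1 - z2)) by nra.
  assert (k + a < 0) by nra. assert (0 < k - a) by nra.
  lra.
Qed.

End CubicAtFixedAngle.

Lemma cos_in_second_quadrant t : PI / 2 < t < PI -> -1 < cos t < 0.
Proof.
  intros Ht. split.
  - rewrite <- cos_PI. apply cos_decreasing_1; lra.
  - apply cos_lt_0; lra.
Qed.

Definition fstar_slope (a b z c : R) : R :=
  - a * z ^ 2 + (2 * c - 6 * a * c) * z + (1 + 4 * c ^ 2 + b - 12 * a * c ^ 2).

Lemma fstar_split a b z t :
  fstar a b z t = 2 * cos t * (1 - 4 * a * cos t ^ 2) + z * fstar_slope a b z (cos t).
Proof. unfold fstar, fstar_slope; ring. Qed.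

Lemma cos_theta_a a : 1 / 4 < a ->
  cos (theta_a a) < 0 /\ 4 * a * cos (theta_a a) ^ 2 = 1.
Proof.
  intros Ha.
  assert (Hsqrt : sqrt a * sqrt a = a) by (apply sqrt_sqrt; lra).
  assert (Hhalf : 1 / 2 < sqrt a) by (pose proof (sqrt_pos a); nra).
  assert (Hk : -1 < - (1 / (2 * sqrt a)) < 0).
  { assert (0 < 1 / (2 * sqrt a) < 1); [|lra].
    split; [apply Rdiv_lt_0_compat; lra|].
    apply (Rmult_lt_reg_r (2 * sqrt a)); [lra|]. field_simplify; lra. }
  unfold theta_a. rewrite cos_acos by lra. split; [lra|].
  field_simplify; [|lra]. rewrite <- Hsqrt at 1. field. lra.
Qed.

Lemma eq_theta_a_iff a t : 1 / 4 < a -> PI / 2 < t < PI ->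
  t = theta_a a <-> 4 * a * cos t ^ 2 = 1.
Proof.
  intros Ha Ht. destruct (cos_theta_a a Ha) as [Hk Hk2].
  pose proof (cos_in_second_quadrant t Ht).
  split; [intros ->; assumption|intros Hc2].
  assert (Hcos : cos t = cos (theta_a a)) by nra.
  rewrite <- (acos_cos t) by lra. rewrite Hcos. apply acos_cos, acos_bound.
Qed.

Lemma four_a_cos_sq_lt_1 a t : 1 / 4 < a -> PI / 2 < t < theta_a a ->
  4 * a * cos t ^ 2 < 1.
Proof.
  intros Ha Ht. destruct (cos_theta_a a Ha) as [Hk Hk2].
  pose proof (acos_bound (- (1 / (2 * sqrt a)))).
  assert (cos (theta_a a) < cos t) by (apply cos_decreasing_1; unfold theta_a in *; lra).
  assert (cos t < 0) by (apply cos_lt_0; unfold theta_a in *; lra).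
  nra.
Qed.

Lemma four_a_cos_sq_gt_1 a t : 1 / 4 < a -> theta_a a < t < PI ->
  1 < 4 * a * cos t ^ 2.
Proof.
  intros Ha Ht. destruct (cos_theta_a a Ha) as [Hk Hk2].
  pose proof (acos_bound (- (1 / (2 * sqrt a)))).
  assert (cos t < cos (theta_a a)) by (apply cos_decreasing_1; unfold theta_a in *; lra).
  nra.
Qed.

Lemma fstar_slope_theta_a_pos a b : standing a b -> 1 / 4 < a ->
  0 < fstar_slope a b 0 (cos (theta_a a)).
Proof.
  intros [Hb [_ [H9 _]]] Ha. destruct (cos_theta_a a Ha) as [_ Hk2].
  unfold fstar_slope.
  set (c := cos (theta_a a)) in *.
  assert (Hinv : a * (4 * c ^ 2) = 1) by lra.
  destruct (Rle_lt_dec 2 (4 * c ^ 2)); nra.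
Qed.

Lemma cos_nat_mul_PI n : cos (INR n * PI) = (-1) ^ n.
Proof.
  induction n as [|n IH]; [simpl; rewrite Rmult_0_l; apply cos_0|].
  rewrite S_INR, Rmult_plus_distr_r, Rmult_1_l, neg_cos, IH. simpl; ring.
Qed.

Lemma sin_nat_mul_PI n : sin (INR n * PI) = 0.
Proof. apply sin_eq_0_1. exists (Z.of_nat n). now rewrite <- INR_IZR_INZ. Qed.

Lemma neg1_pow_sq k : (-1) ^ k * (-1) ^ k = 1.
Proof. rewrite <- Rpow_mult_distr. replace (-1 * -1) with 1 by ring. apply pow1. Qed.

Lemma sin_sign_between k y : INR k * PI < y < INR (S k) * PI -> 0 < (-1) ^ k * sin y.
Proof.
  intros Hy. rewrite S_INR in Hy.
  replace y with (INR k * PI + (y - INR k * PI)) by ring.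
  rewrite sin_plus, sin_nat_mul_PI, cos_nat_mul_PI.
  replace ((-1) ^ k * (0 * cos (y - INR k * PI) + (-1) ^ k * sin (y - INR k * PI)))
    with ((-1) ^ k * (-1) ^ k * sin (y - INR k * PI)) by ring.
  rewrite neg1_pow_sq, Rmult_1_l. apply sin_gt_0; lra.
Qed.

(* The nodes j pi / (m+1) are the zeros of sin ((m+1) theta); Jlo and Jhi
   are nodes, except Jlo m (fl m + 1) = pi/2. *)
Definition sin_node (m j : nat) : R := INR j / INR (m + 1) * PI.

Lemma INR_succ_pos m : 0 < INR (m + 1).
Proof. apply lt_0_INR; lia. Qed.

Lemma sin_node_scaled m j : INR (m + 1) * sin_node m j = INR j * PI.
Proof. unfold sin_node. pose proof (INR_succ_pos m). field. lra. Qed.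

Lemma sin_node_bracket m k t : sin_node m k < t < sin_node m (S k) ->
  INR k * PI < INR (m + 1) * t < INR (S k) * PI.
Proof.
  intros Ht. pose proof (INR_succ_pos m).
  rewrite <- !(sin_node_scaled m). split; apply Rmult_lt_compat_l; lra.
Qed.

Lemma half_PI_lt_sin_node m j : (m + 1 < 2 * j)%nat -> PI / 2 < sin_node m j.
Proof.
  intros Hj. pose proof (INR_succ_pos m). pose proof PI_RGT_0.
  apply lt_INR in Hj. rewrite mult_INR in Hj. simpl INR in Hj.
  apply (Rmult_lt_reg_l (INR (m + 1))); [lra|]. rewrite sin_node_scaled. nra.
Qed.

Lemma sin_node_le_half_PI m j : (2 * j <= m + 1)%nat -> sin_node m j <= PI / 2.
Proof.
  intros Hj. pose proof (INR_succ_pos m). pose proof PI_RGT_0.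
  apply le_INR in Hj. rewrite mult_INR in Hj. simpl INR in Hj.
  apply (Rmult_le_reg_l (INR (m + 1))); [lra|]. rewrite sin_node_scaled. nra.
Qed.

Lemma sin_node_le_PI m j : (j <= m + 1)%nat -> sin_node m j <= PI.
Proof.
  intros Hj. pose proof (INR_succ_pos m). pose proof PI_RGT_0. apply le_INR in Hj.
  apply (Rmult_le_reg_l (INR (m + 1))); [lra|]. rewrite sin_node_scaled. nra.
Qed.

Lemma sin_node_lt_PI m j : (j < m + 1)%nat -> sin_node m j < PI.
Proof.
  intros Hj. pose proof (INR_succ_pos m). pose proof PI_RGT_0. apply lt_INR in Hj.
  apply (Rmult_lt_reg_l (INR (m + 1))); [lra|]. rewrite sin_node_scaled. nra.
Qed.

Lemma fl_spec m : (m <= 2 * fl m <= m + 1)%nat.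
Proof.
  unfold fl. pose proof (Nat.div_mod_eq (m + 1) 2).
  pose proof (Nat.mod_upper_bound (m + 1) 2). lia.
Qed.

Lemma Jlo_not_first m k : (fl m + 1 < S k)%nat ->
  Jlo m (S k) = sin_node m k /\ PI / 2 < sin_node m k.
Proof.
  intros Hk. pose proof (fl_spec m). split.
  - unfold Jlo. rewrite (proj2 (Nat.eqb_neq _ _)) by lia.
    now rewrite Nat.sub_succ, Nat.sub_0_r.
  - apply half_PI_lt_sin_node; lia.
Qed.

Lemma inJ_bracket m k t : (fl m + 1 <= S k <= m + 1)%nat -> inJ m (S k) t ->
  sin_node m k < t < sin_node m (S k) /\ PI / 2 < t < PI.
Proof.
  intros Hk [Hlo Hhi]. pose proof (fl_spec m).
  pose proof (sin_node_le_PI m (S k) ltac:(lia)).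
  destruct (Nat.eq_dec (S k) (fl m + 1)) as [Hfirst|Hnot].
  - unfold Jlo in Hlo. rewrite (proj2 (Nat.eqb_eq _ _) Hfirst) in Hlo.
    pose proof (sin_node_le_half_PI m k ltac:(lia)).
    unfold Jhi in Hhi. fold (sin_node m (S k)) in Hhi. lra.
  - destruct (Jlo_not_first m k ltac:(lia)) as [Hnode Hhalf].
    rewrite Hnode in Hlo. unfold Jhi in Hhi. fold (sin_node m (S k)) in Hhi. lra.
Qed.

(* psi = w * g_m; unlike g_m it stays continuous where w vanishes. *)
Definition psi (w : R -> R) (m : nat) (t : R) : R :=
  (1 - cos t * w t) * sin (INR (m + 1) * t) / sin t
  + w t * (- cos (INR (m + 1) * t) + w t ^ (m + 1)).

Lemma g_eq_psi_div w m t : w t <> 0 -> sin t <> 0 -> g w m t = psi w m t / w t.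
Proof. intros Hw Hsin. unfold g, psi. field. auto. Qed.

Lemma g_at_sin_node w m j : g w m (sin_node m j) = - (-1) ^ j + w (sin_node m j) ^ (m + 1).
Proof.
  unfold g. rewrite sin_node_scaled, sin_nat_mul_PI, cos_nat_mul_PI.
  unfold Rdiv; ring.
Qed.

Section RootBranch.

Variables (a b : R) (w : R -> R) (m : nat).
Hypotheses (Hab : standing a b) (Hw : is_w a b w) (Ha : 1 / 4 < a).

Lemma w_unique t z : PI / 2 < t < PI -> -1 < z < 1 -> fstar a b z t = 0 -> z = w t.
Proof.
  intros Ht Hz Ez. destruct (Hw t Ht) as [Hwt Ewt].
  exact (fstar_root_unique a b t Hab Ha (cos_in_second_quadrant t Ht) z (w t) Hz Hwt Ez Ewt).
Qed.

Lemma w_continuous t : PI / 2 < t < PI -> continuity_pt w t.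
Proof.
  apply (root_continuous (fstar a b) w (PI / 2) PI).
  - intros s; unfold fstar; reg.
  - intros z s; unfold fstar; reg.
  - intros s Hs. exact (fstar_neg_at_m1 a b s Hab Ha (cos_in_second_quadrant s Hs)).
  - intros s Hs. exact (fstar_pos_at_1 a b s Hab Ha (cos_in_second_quadrant s Hs)).
  - exact Hw.
  - exact w_unique.
Qed.

Lemma w_eq_0_iff t : PI / 2 < t < PI -> w t = 0 <-> t = theta_a a.
Proof.
  intros Ht. rewrite (eq_theta_a_iff a t Ha Ht).
  pose proof (cos_in_second_quadrant t Ht). destruct (Hw t Ht) as [_ Ewt].
  rewrite fstar_split in Ewt. split.
  - intros Hw0. rewrite Hw0 in Ewt.
    assert (Hprod : cos t * (1 - 4 * a * cos t ^ 2) = 0) by lra.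
    destruct (Rmult_integral _ _ Hprod); lra.
  - intros Hc2. symmetry. apply w_unique; [assumption | lra |].
    rewrite fstar_split, Hc2. ring.
Qed.

Lemma w_sign_near_theta_a : PI / 2 < theta_a a < PI ->
  near (theta_a a) (fun t => PI / 2 < t < PI
    /\ (t < theta_a a -> 0 < w t) /\ (theta_a a < t -> w t < 0)).
Proof.
  intros Hta.
  assert (Hslope : near (theta_a a) (fun t => 0 < fstar_slope a b (w t) (cos t))).
  { apply continuity_pt_pos_near.
    - pose proof (w_continuous _ Hta). unfold fstar_slope; reg.
    - rewrite (proj2 (w_eq_0_iff _ Hta) eq_refl). now apply fstar_slope_theta_a_pos. }
  apply (near_mono _ _ _ (near_and _ _ _ (near_open_interval _ _ _ Hta) Hslope)).
  intros t [Ht Hpos]. split; [assumption|].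
  pose proof (cos_in_second_quadrant t Ht). destruct (Hw t Ht) as [_ Ewt].
  rewrite fstar_split in Ewt.
  split; intros Hside.
  - pose proof (four_a_cos_sq_lt_1 a t Ha ltac:(lra)). nra.
  - pose proof (four_a_cos_sq_gt_1 a t Ha ltac:(lra)). nra.
Qed.

Lemma psi_theta_a : PI / 2 < theta_a a < PI ->
  psi w m (theta_a a) = sin (INR (m + 1) * theta_a a) / sin (theta_a a).
Proof.
  intros Hta. unfold psi. rewrite (proj2 (w_eq_0_iff _ Hta) eq_refl).
  unfold Rdiv. ring.
Qed.

Lemma g_sign_near_theta_a k : PI / 2 < theta_a a < PI ->
  INR k * PI < INR (m + 1) * theta_a a < INR (S k) * PI ->
  near (theta_a a) (fun t => PI / 2 < t < PI
    /\ (t < theta_a a -> 0 < (-1) ^ k * g w m t)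
    /\ (theta_a a < t -> (-1) ^ k * g w m t < 0)).
Proof.
  intros Hta Hk.
  assert (Hpsi : near (theta_a a) (fun t => 0 < (-1) ^ k * psi w m t)).
  { apply continuity_pt_pos_near.
    - pose proof (w_continuous _ Hta). pose proof (sin_gt_0 (theta_a a) ltac:(lra) ltac:(lra)).
      unfold psi; reg; lra.
    - rewrite psi_theta_a by assumption. unfold Rdiv. rewrite <- Rmult_assoc.
      apply Rmult_lt_0_compat; [now apply sin_sign_between|].
      apply Rinv_0_lt_compat, sin_gt_0; lra. }
  apply (near_mono _ _ _ (near_and _ _ _ (w_sign_near_theta_a Hta) Hpsi)).
  intros t [[Ht [Hleft Hright]] Hpos]. split; [assumption|].
  assert (sin t <> 0) by (apply Rgt_not_eq, sin_gt_0; lra).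
  split; intros Hside.
  - specialize (Hleft Hside). rewrite g_eq_psi_div by lra. unfold Rdiv.
    rewrite <- Rmult_assoc. apply Rmult_lt_0_compat; [assumption|].
    now apply Rinv_0_lt_compat.
  - specialize (Hright Hside). rewrite g_eq_psi_div by lra. unfold Rdiv.
    rewrite <- Rmult_assoc. apply Rmult_pos_neg; [assumption|].
    now apply Rinv_lt_0_compat.
Qed.

Lemma g_at_sin_node_sign j : PI / 2 < sin_node m j < PI ->
  (-1) ^ j * g w m (sin_node m j) < 0.
Proof.
  intros Hj. rewrite g_at_sin_node.
  destruct (Hw _ Hj) as [Hwj _].
  assert (Hpow : Rabs ((-1) ^ j * w (sin_node m j) ^ (m + 1)) < 1).
  { rewrite Rabs_mult, pow_1_abs, Rmult_1_l, <- RPow_abs.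
    apply pow_lt_1_compat; [split; [apply Rabs_pos | apply Rabs_def1; lra] | lia]. }
  apply Rabs_def2 in Hpow. pose proof (neg1_pow_sq j). nra.
Qed.

Lemma scaled_g_continuous k t : PI / 2 < t < PI -> t <> theta_a a ->
  continuity_pt (fun s => (-1) ^ k * g w m s) t.
Proof.
  intros Ht Hne. pose proof (w_continuous t Ht).
  assert (w t <> 0) by (rewrite (w_eq_0_iff t Ht); assumption).
  pose proof (sin_gt_0 t ltac:(lra) ltac:(lra)).
  unfold g; reg; lra.
Qed.

Lemma g_zero_between k s1 s2 : PI / 2 < s1 -> s1 < s2 -> s2 < PI ->
  ~ (s1 <= theta_a a <= s2) ->
  (-1) ^ k * g w m s1 < 0 < (-1) ^ k * g w m s2 ->
  exists t, s1 < t < s2 /\ t <> theta_a a /\ w t <> 0 /\ g w m t = 0.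
Proof.
  intros H1 H12 H2 Hout Hsign.
  destruct (IVT_open (fun s => (-1) ^ k * g w m s) s1 s2) as [t [Ht Ht0]];
    [intros z Hz; apply scaled_g_continuous; lra | assumption | assumption |].
  assert (Htne : t <> theta_a a) by (intros ->; lra).
  exists t; repeat split; [lra | lra | assumption | |].
  - rewrite (w_eq_0_iff t ltac:(lra)). assumption.
  - destruct (Rmult_integral _ _ Ht0) as [Hpow|]; [|assumption].
    exfalso. exact (pow_nonzero (-1) k ltac:(lra) Hpow).
Qed.

Lemma zero_in_left_of_theta_a k : (fl m + 1 < S k <= m + 1)%nat ->
  inJ m (S k) (theta_a a) -> exists t, t < theta_a a /\ zero_in a w m (S k) t.
Proof.
  intros Hk HJ.
  destruct (inJ_bracket m k _ ltac:(lia) HJ) as [Hbr Hta].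
  destruct (Jlo_not_first m k ltac:(lia)) as [Hlo Hhalf].
  destruct (near_left_point _ _ _ (g_sign_near_theta_a k Hta (sin_node_bracket m k _ Hbr))
    (proj1 Hbr)) as [t1 [Ht1 [_ [Hpos _]]]].
  pose proof (g_at_sin_node_sign k ltac:(lra)) as Hnode.
  destruct (g_zero_between k (sin_node m k) t1) as [t [Ht Hzero]];
    [lra | lra | lra | lra | split; [|apply Hpos]; lra |].
  exists t; split; [lra|]. split; [|assumption].
  unfold inJ. rewrite Hlo. destruct HJ. lra.
Qed.

Lemma zero_in_right_of_theta_a k : (fl m + 1 <= S k <= m)%nat ->
  inJ m (S k) (theta_a a) -> exists t, theta_a a < t /\ zero_in a w m (S k) t.
Proof.
  intros Hk HJ.
  destruct (inJ_bracket m k _ ltac:(lia) HJ) as [Hbr Hta].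
  pose proof (sin_node_lt_PI m (S k) ltac:(lia)) as Hhi.
  destruct (near_right_point _ _ _ (g_sign_near_theta_a k Hta (sin_node_bracket m k _ Hbr))
    (proj2 Hbr)) as [t1 [Ht1 [_ [_ Hneg]]]].
  pose proof (g_at_sin_node_sign (S k) ltac:(lra)) as Hnode. simpl pow in Hnode.
  destruct (g_zero_between k t1 (sin_node m (S k))) as [t [Ht Hzero]];
    [lra | lra | lra | lra | split; [apply Hneg|]; lra |].
  exists t; split; [lra|]. split; [|assumption].
  destruct HJ. split; [lra|]. unfold Jhi. fold (sin_node m (S k)). lra.
Qed.

End RootBranch.

Theorem mainTheorem18 (a b : R) (w : R -> R) (m h : nat) :
  standing a b -> is_w a b w -> a > 1 / 4 -> (6 <= m)%nat ->
  (fl m + 1 <= h <= m + 1)%nat ->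
  inJ m h (theta_a a) ->
  ((fl m + 2 <= h <= m)%nat ->
     exists t1 t2, t1 <> t2 /\ zero_in a w m h t1 /\ zero_in a w m h t2) /\
  ((h = m + 1 \/ h = fl m + 1)%nat -> exists t, zero_in a w m h t).
Proof.
  intros Hab Hw Ha Hm Hh HJ.
  pose proof (fl_spec m).
  destruct h as [|k]; [lia|].
  split.
  - intros Hmid.
    destruct (zero_in_left_of_theta_a a b w m Hab Hw Ha k ltac:(lia) HJ) as [t1 [Ht1 Z1]].
    destruct (zero_in_right_of_theta_a a b w m Hab Hw Ha k ltac:(lia) HJ) as [t2 [Ht2 Z2]].
    exists t1, t2. split; [lra | auto].
  - intros [Hlast | Hfirst].
    + destruct (zero_in_left_of_theta_a a b w m Hab Hw Ha k ltac:(lia) HJ) as [t [_ Z]].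
      now exists t.
    + destruct (zero_in_right_of_theta_a a b w m Hab Hw Ha k ltac:(lia) HJ) as [t [_ Z]].
      now exists t.
Qed.
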